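(* Let $T=(V,E)$ be a tree with $\mathrm{pthin}(T)=2$. Then there exists a simple path $C_0=v_1,\dots,v_k$ in $T$ and a linear ordering of $V$ that is strongly consistent with the partition $\{V^0,V^1\}$, where $V^0=\{v_1,\dots,v_k\}$ and $V^1=V\setminus V^0$.
   Context: For a graph $G=(V,E)$, a linear ordering $<$ of $V$ and a partition of $V$ into classes are called strongly consistent if for every triple $r<s<t$ of vertices with $rt\in E$: if $r$ and $s$ belong to the same class then $st\in E$, and if $s$ and $t$ belong to the same class then $rs\in E$. The proper thinness $\mathrm{pthin}(G)$ is the minimum $k$ such that some ordering of $V$ and some partition of $V$ into $k$ classes are strongly consistent. *)

From mathcomp Require Import all_boot.
Set Implicit Arguments. Unset Strict Implicit. Unset Printing Implicit Defensive.

Definition simple_graph (T : finType) (e : rel T) : Prop :=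
  symmetric e /\ irreflexive e.

Definition connected_graph (T : finType) (e : rel T) : Prop :=
  forall x y : T, connect e x y.

Definition acyclic_graph (T : finType) (e : rel T) : Prop :=
  forall c : seq T, uniq c -> 3 <= size c -> ~~ cycle e c.

Definition is_tree (T : finType) (e : rel T) : Prop :=
  [/\ simple_graph e, connected_graph e & acyclic_graph e].

(* A linear ordering of V is given by an injective map f : T -> nat
   (r < s iff f r < f s); a partition into classes by a class map c. *)
Definition strongly_consistent (T : finType) (K : eqType) (e : rel T)
    (f : T -> nat) (c : T -> K) : Prop :=
  forall r s t : T, f r < f s -> f s < f t -> e r t ->
    (c r == c s -> e s t) /\ (c s == c t -> e r s).

Definition pthin_le (T : finType) (e : rel T) (k : nat) : Prop :=
  exists (f : T -> nat) (c : T -> 'I_k), injective f /\ strongly_consistent e f c.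

Lemma pthin_le_card (T : finType) (e : rel T) : pthin_le e #|T|.
Proof.
exists (fun x => nat_of_ord (enum_rank x)), (@enum_rank T); split.
  by move=> x y /val_inj /enum_rank_inj.
move=> r s t lrs lst _; split=> /eqP /enum_rank_inj E; [move: lrs | move: lst]; by rewrite /= E ltnn.
Qed.

Definition pthin_eq (T : finType) (e : rel T) (k : nat) : Prop :=
  pthin_le e k /\ (forall j, pthin_le e j -> k <= j).

From mathcomp Require Import all_boot zify.
Set Implicit Arguments. Unset Strict Implicit. Unset Printing Implicit Defensive.

(* Fix a strongly consistent ordering [f] and 2-partition [c] of the tree, and let [P] be the
   path joining the [f]-minimal and [f]-maximal vertices, so that every vertex off [P] lies
   strictly (in [f]) inside some edge of [P]. With two classes and no triangles this forces:
   every edge off [P] is monochromatic; no vertex off [P] lies strictly inside an edge off [P];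
   and a vertex off [P] lying between its anchor [p] on [P] and an off-[P] neighbour of [p] is
   adjacent to [p]. Hence sorting the vertices by the position of their anchor along [P], then
   by [f], is strongly consistent with {P, V \ P}: triples inside one anchor block are settled
   by these facts, and an edge between two blocks is an edge of [P] joining consecutive
   vertices of [P]. *)


Lemma ord2_eq (a b d : 'I_2) : a != d -> b != d -> a = b.
Proof.
move=> ad bd; apply: val_inj; move: ad bd; rewrite -!(inj_eq val_inj) /=.
by have := ltn_ord a; have := ltn_ord b; have := ltn_ord d; lia.
Qed.

Lemma mem_split2 (T : eqType) (s : seq T) x y : x \in s -> y \in s -> x != y ->
  exists A B C, s = A ++ x :: B ++ y :: C \/ s = A ++ y :: B ++ x :: C.
Proof.
case/splitPr => A R; rewrite mem_cat inE => /orP[yA|/orP[/eqP->|yR]] nxy.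
- by case/splitPr: yA nxy => A1 A2 _; exists A1, A2, R; right; rewrite -catA.
- by rewrite eqxx in nxy.
- by case/splitPr: yR nxy => B C _; exists A, B, C; left.
Qed.

Lemma radix_lt a b u w K : u < K -> w < K -> a * K + u < b * K + w ->
  a < b \/ a = b /\ u < w.
Proof.
move=> uK wK; case: (ltngtP a b) => [|ba|<-]; [by left| |by right; lia].
by nia.
Qed.

Lemma radix_eq a b u w K : u < K -> w < K -> a * K + u = b * K + w -> u = w.
Proof. by move=> uK wK /(congr1 (modn^~ K)); rewrite !modnMDl !modn_small. Qed.

Section Graph.
Variables (T : finType) (e : rel T).
Hypotheses (e_sym : symmetric e) (e_irr : irreflexive e).

Lemma edge_neq x y : e x y -> x != y.
Proof. by apply: contraTneq => ->; rewrite e_irr. Qed.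

Section Ordered.
Variables (f : T -> nat) (c : T -> 'I_2).
Hypotheses (f_inj : injective f) (sc : strongly_consistent e f c).

Lemma consistentL r s t : f r < f s -> f s < f t -> e r t -> c r = c s -> e s t.
Proof. by move=> rs st rt crs; apply: (sc rs st rt).1; rewrite crs. Qed.

Lemma consistentR r s t : f r < f s -> f s < f t -> e r t -> c s = c t -> e r s.
Proof. by move=> rs st rt cst; apply: (sc rs st rt).2; rewrite cst. Qed.

Lemma path_straddle x s u : path e x s -> f x < f u < f (last x s) -> u \notin x :: s ->
  exists r t, [/\ r \in x :: s, t \in x :: s, e r t & f r < f u < f t].
Proof.
elim: s x => [|y s IHs] x /=; first by lia.
case/andP=> exy ys /andP[xu ul]; rewrite inE negb_or => /andP[_ us].
case: (ltngtP (f u) (f y)) => [uy|yu|/f_inj uy].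
- by exists x, y; rewrite !inE !eqxx orbT xu uy.
- have [r [t [rin tin ert rut]]] := IHs y ys (introT andP (conj yu ul)) us.
  by exists r, t; split; rewrite // inE ?rin ?tin orbT.
- by rewrite uy inE eqxx in us.
Qed.

Section TriangleFree.
Hypothesis triangle_free : forall x y z, e x y -> e y z -> e x z -> False.

Lemma inner_class_neq x y z : e x y -> c x = c y -> f x < f z < f y -> c z != c x.
Proof.
move=> exy cxy /andP[xz zy]; apply/eqP => czx.
apply: (triangle_free _ (consistentL xz zy exy _) exy).
  by apply: consistentR xz zy exy _; rewrite czx.
by rewrite czx.
Qed.

Lemma straddle_cases x y s : e x y -> f x < f s < f y ->
  [\/ e s x, e s y | [/\ c x = c y, c s != c x & forall z, e s z -> c z = c s]].
Proof.
move=> exy /andP[xs sy].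
case esx: (e s x); first by constructor 1.
case esy: (e s y); first by constructor 2.
have cxs : c x != c s by apply: contraFneq esy; apply: consistentL xs sy exy.
have cys : c y != c s.
  by apply: contraFneq esx => cys; rewrite e_sym; apply: (consistentR xs sy exy).
have cxy : c x = c y := ord2_eq cxs cys.
constructor 3; split; rewrite 1?eq_sym //.
move=> z esz; apply/eqP; apply: contraTT esz => czs.
have czx : c z = c x := ord2_eq czs cxs.
case: (ltngtP (f z) (f x)) => [zx|xz|/f_inj->]; last by rewrite esx.
  by apply/negP; rewrite e_sym => /(consistentL zx xs)/(_ czx); rewrite e_sym esx.
case: (ltngtP (f z) (f y)) => [zy|yz|/f_inj->]; last by rewrite esy.
  by have := inner_class_neq exy cxy (introT andP (conj xz zy)); rewrite czx eqxx.
apply/negP => esz; suff: e s y by rewrite esy.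
by apply: (consistentR sy yz esz); rewrite czx cxy.
Qed.

Lemma straddling_edges_eq x y r t u : e x y -> e r t -> c x = c y -> c r = c t -> c x = c r ->
  f x < f u < f y -> f r < f u < f t -> x = r /\ y = t.
Proof.
move=> exy ert cxy crt cxr /andP[xu uy] /andP[ru ut].
have inner_xy z : f x < f z < f y -> c z != c r by rewrite -cxr; apply: inner_class_neq.
have inner_rt z : f r < f z < f t -> c z != c r by apply: inner_class_neq.
split; apply: f_inj.
- case: (ltngtP (f x) (f r)) => // [xr|rx].
    by have := inner_xy r; rewrite eqxx; lia.
  by have := inner_rt x; rewrite cxr eqxx; lia.
- case: (ltngtP (f y) (f t)) => // [yt|ty].
    by have := inner_rt y; rewrite -cxy cxr eqxx; lia.
  by have := inner_xy t; rewrite -crt eqxx; lia.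
Qed.

End TriangleFree.

Section Tree.
Hypothesis e_acyc : acyclic_graph e.

Lemma acyclic_open_path x s : uniq (x :: s) -> 2 <= size s -> path e x s -> ~~ e (last x s) x.
Proof.
move=> xs_uniq s_size xs_path; apply: contraNN (e_acyc xs_uniq _) => [ex|].
  by rewrite /= rcons_path xs_path ex.
by rewrite /= ltnS.
Qed.

Lemma acyclic_triangle_free x y z : e x y -> e y z -> e x z -> False.
Proof.
move=> exy eyz exz.
have xyz_uniq : uniq [:: x; y; z].
  by rewrite /= !inE negb_or (edge_neq exy) (edge_neq exz) (edge_neq eyz).
by have := acyclic_open_path xyz_uniq erefl; rewrite /= exy eyz e_sym exz; move/(_ isT).
Qed.

Lemma sorted_segment s A a B b C : sorted e s -> uniq s -> s = A ++ a :: B ++ b :: C ->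
  [/\ path e a (B ++ [:: b]), uniq (a :: B ++ [:: b]) & {subset a :: B ++ [:: b] <= s}].
Proof.
move=> s_sorted s_uniq s_def.
have seg_def : s = A ++ (a :: B ++ [:: b]) ++ C by rewrite s_def /= -catA.
move: s_sorted s_uniq; rewrite seg_def cat_uniq => /cat_sorted2[_ /cat_sorted2[seg_path _]].
case/and3P=> _ _; rewrite cat_uniq => /andP[seg_uniq _].
by split=> // z z_seg; rewrite !mem_cat z_seg orbT.
Qed.

Lemma sorted_chord s A a B b C : sorted e s -> uniq s -> s = A ++ a :: B ++ b :: C ->
  e a b -> B = [::].
Proof.
move=> s_sorted s_uniq s_def eab; case: B s_def => // y B s_def.
have [seg_path seg_uniq _] := sorted_segment s_sorted s_uniq s_def.
have seg_size : 2 <= size ((y :: B) ++ [:: b]) by rewrite size_cat addn1.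
by have /negP[] := acyclic_open_path seg_uniq seg_size seg_path; rewrite last_cat e_sym.
Qed.

Lemma sorted_edge_index s a b : sorted e s -> uniq s -> a \in s -> b \in s -> e a b ->
  index a s < index b s -> index b s = (index a s).+1.
Proof.
move=> s_sorted s_uniq aP bP eab ab; have ab_neq := edge_neq eab.
have [A [B [C s_def]]] := mem_split2 aP bP ab_neq.
have B0 : B = [::] by case: s_def => /(sorted_chord s_sorted s_uniq); apply; rewrite // e_sym.
move: s_uniq ab; rewrite B0 in s_def.
case: s_def => ->; rewrite cat_uniq /= !negb_or => /and3P[_ /and3P[aA bA _] _];
  rewrite !index_cat (negbTE aA) (negbTE bA) /= !eqxx; case: eqP => _; lia.
Qed.

Section Path.
Hypothesis e_conn : connected_graph e.
Variables (v : T) (ps : seq T).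
Local Notation P := (v :: ps).
Hypotheses (P_uniq : uniq P) (P_sorted : sorted e P).

Definition off_edge := [rel x y | [&& e x y, x \notin P & y \notin P]].

(* [attached x q]: the component of [x] in the forest [T - P] has a vertex adjacent to
   [q \in P]; in a tree such a [q] is unique. *)
Definition attached x q := (q \in P) && [exists h, connect off_edge x h && e h q].

Definition anchor x := if x \in P then x else odflt x [pick q | attached x q].

Lemma off_edge_sym : symmetric off_edge.
Proof. by move=> x y /=; rewrite e_sym (andbC (x \notin P)). Qed.

Lemma off_path_notin x s : path off_edge x s -> all [pred y | y \notin P] s.
Proof. by elim: s x => //= y s IHs x /andP[/and3P[_ _ ->] /IHs]. Qed.

Lemma connect_off_edge_notin x y : x \notin P -> connect off_edge x y -> y \notin P.
Proof.
move=> xP /connectP[s xs_path ->]; have := mem_last x s.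
by rewrite inE => /orP[/eqP-> //|/(allP (off_path_notin xs_path))].
Qed.

Lemma attached_exists x : x \notin P -> exists q, attached x q.
Proof.
move=> xP; have /connectP[s xs_path] := e_conn x v.
elim: s x xP xs_path => [|y s IHs] x xP /=; first by move=> _ vx; rewrite -vx inE eqxx in xP.
case/andP=> exy ys_path vl; case yP: (y \in P).
  by exists y; rewrite /attached yP; apply/existsP; exists x; rewrite connect0.
have [q /andP[qP /existsP[h /andP[yh ehq]]]] := IHs y (negbT yP) ys_path vl.
exists q; rewrite /attached qP; apply/existsP; exists h; rewrite ehq andbT.
by apply: connect_trans yh; apply: connect1; rewrite /= exy xP yP.
Qed.

Lemma off_path_no_bridge A a B b C ha hb : P = A ++ a :: B ++ b :: C ->
  ha \notin P -> hb \notin P -> e ha a -> e hb b -> ~~ connect off_edge hb ha.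
Proof.
move=> P_def haP hbP eha ehb; apply/negP => /connectP[s hbs_path ha_def].
case: (shortenP hbs_path) ha_def => {hbs_path}s hbs_path hbs_uniq _ ha_def.
(* [a] to [b] along [P], then [b, hb, ..., ha] and back to [a], would be a cycle. *)
have [seg_path seg_uniq seg_sub] := sorted_segment P_sorted P_uniq P_def.
have s_off := off_path_notin hbs_path.
have cyc_uniq : uniq ((a :: B ++ [:: b]) ++ hb :: s).
  rewrite cat_uniq seg_uniq hbs_uniq andbT; apply/hasPn => z zs; apply/negP => /seg_sub zP.
  move: zs; rewrite inE => /orP[/eqP z_hb|/(allP s_off)/=]; last by rewrite zP.
  by rewrite -z_hb zP in hbP.
have cyc_size : 2 <= size ((B ++ [:: b]) ++ hb :: s) by rewrite !size_cat /=; lia.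
have cyc_path : path e a ((B ++ [:: b]) ++ hb :: s).
  rewrite cat_path seg_path last_cat /= e_sym ehb.
  by apply: sub_path hbs_path => x y /andP[].
by move: (acyclic_open_path cyc_uniq cyc_size cyc_path); rewrite last_cat /= -ha_def eha.
Qed.

Lemma attached_unique x q1 q2 : x \notin P -> attached x q1 -> attached x q2 -> q1 = q2.
Proof.
move=> xP /andP[q1P /existsP[h1 /andP[xh1 eh1]]] /andP[q2P /existsP[h2 /andP[xh2 eh2]]].
apply/eqP; apply: contraT => q12.
have h1P := connect_off_edge_notin xP xh1; have h2P := connect_off_edge_notin xP xh2.
have h12 : connect off_edge h1 h2.
  by apply: connect_trans xh2; rewrite (sym_connect_sym off_edge_sym).
have [A [B [C [P_def|P_def]]]] := mem_split2 q1P q2P q12.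
- by have := off_path_no_bridge P_def h1P h2P eh1 eh2; rewrite (sym_connect_sym off_edge_sym) h12.
- by have := off_path_no_bridge P_def h2P h1P eh2 eh1; rewrite h12.
Qed.

Lemma anchorP x : x \notin P -> attached x (anchor x).
Proof.
move=> xP; rewrite /anchor (negbTE xP); case: pickP => [q //|no_q].
by have [q] := attached_exists xP; rewrite no_q.
Qed.

Lemma anchor_mem x : anchor x \in P.
Proof. by case: (boolP (x \in P)) => [xP|/anchorP/andP[]//]; rewrite /anchor xP. Qed.

Lemma anchor_id x : x \in P -> anchor x = x.
Proof. by rewrite /anchor => ->. Qed.

Lemma anchor_adj x q : x \notin P -> q \in P -> e x q -> anchor x = q.
Proof.
move=> xP qP exq; apply: (attached_unique xP (anchorP xP)).
by rewrite /attached qP; apply/existsP; exists x; rewrite connect0.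
Qed.

Lemma anchor_edge x y : x \notin P -> y \notin P -> e x y -> anchor x = anchor y.
Proof.
move=> xP yP exy; apply: (attached_unique xP (anchorP xP)).
case/andP: (anchorP yP) => aP /existsP[h /andP[yh eh]].
rewrite /attached aP; apply/existsP; exists h; rewrite eh andbT.
by apply: connect_trans yh; apply: connect1; rewrite /= exy xP yP.
Qed.

Lemma off_path_neighbor x : x \notin P -> e x (anchor x) \/ forall q, q \in P -> ~~ e x q.
Proof.
move=> xP; case: (boolP [exists q in P, e x q]) => [/existsP[q /andP[qP exq]]|no_q].
  by left; rewrite (anchor_adj xP qP exq).
by right=> q qP; apply: contraNN no_q => exq; apply/existsP; exists q; rewrite qP.
Qed.

Lemma edge_anchor_neq x y : e x y -> anchor x != anchor y -> x \in P /\ y \in P.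
Proof.
move=> exy; case: (boolP (x \in P)) => xP; case: (boolP (y \in P)) => yP //.
- by rewrite e_sym in exy; rewrite (anchor_id xP) (anchor_adj yP xP exy) eqxx.
- by rewrite (anchor_id yP) (anchor_adj xP yP exy) eqxx.
- by rewrite (anchor_edge xP yP exy) eqxx.
Qed.

Hypotheses (P_min : forall x, f v <= f x) (P_max : forall x, f x <= f (last v ps)).

Lemma off_path_straddle u : u \notin P -> exists r t, [/\ r \in P, t \in P, e r t & f r < f u < f t].
Proof.
move=> uP; apply: path_straddle => //.
have uv : u != v by apply: contraNneq uP => ->; exact: mem_head.
have ul : u != last v ps by apply: contraNneq uP => ->; exact: mem_last.
by move: uv ul; rewrite -!(inj_eq f_inj); have := P_min u; have := P_max u; lia.
Qed.

Lemma monochromatic_straddle_on_path x y u : u \notin P -> (forall z, e u z -> c z = c u) ->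
  e x y -> f x < f u < f y -> c x = c y -> c u != c x -> x \in P /\ y \in P.
Proof.
move=> uP u_class exy xuy cxy cux.
have [r [t [rP tP ert /[dup] rut /andP[ru ut]]]] := off_path_straddle uP.
case: (straddle_cases acyclic_triangle_free ert rut) => [eur|eut|[crt cur _]].
- have eut := consistentL ru ut ert (u_class r eur).
  by rewrite e_sym in eur; case: (acyclic_triangle_free eur eut ert).
- have eru : e r u by apply: (consistentR ru ut ert); rewrite (u_class t eut).
  by case: (acyclic_triangle_free eru eut ert).
have cxr : c x = c r by apply: (@ord2_eq _ _ (c u)); rewrite eq_sym.
by have [-> ->] := straddling_edges_eq acyclic_triangle_free exy ert cxy crt cxr xuy rut.
Qed.

Lemma nonadjacent_class u : u \notin P -> (forall q, q \in P -> ~~ e u q) ->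
  forall z, e u z -> c z = c u.
Proof.
move=> uP u_far; have [r [t [rP tP ert rut]]] := off_path_straddle uP.
case: (straddle_cases acyclic_triangle_free ert rut) => [eur|eut|[_ _ //]].
- by have := u_far r rP; rewrite eur.
- by have := u_far t tP; rewrite eut.
Qed.

Lemma off_edge_class x y : x \notin P -> y \notin P -> e x y -> c x = c y.
Proof.
move=> xP yP exy.
case: (off_path_neighbor xP) => [exa|x_far]; last by rewrite (nonadjacent_class xP x_far exy).
case: (off_path_neighbor yP) => [eya|y_far].
  by rewrite (anchor_edge xP yP exy) in exa; case: (acyclic_triangle_free exy eya exa).
by rewrite e_sym in exy; rewrite (nonadjacent_class yP y_far exy).
Qed.

Lemma anchor_inner_adj p h u : p \in P -> h \notin P -> e p h -> u \notin P -> anchor u = p ->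
  (f p < f u < f h) || (f h < f u < f p) -> e p u.
Proof.
move=> pP hP eph uP u_anchor /orP[/[dup] puh /andP[pu uh]|/[dup] hup /andP[hu up]].
all: case: (off_path_neighbor uP) => [|u_far]; first by rewrite u_anchor e_sym.
all: have u_class := nonadjacent_class uP u_far.
- case: (straddle_cases acyclic_triangle_free eph puh) => [eup|euh|[cph cup _]].
  + by rewrite e_sym.
  + exact: consistentR pu uh eph (off_edge_class uP hP euh).
  + by have [_] := monochromatic_straddle_on_path uP u_class eph puh cph cup; rewrite (negbTE hP).
- have ehp : e h p by rewrite e_sym.
  case: (straddle_cases acyclic_triangle_free ehp hup) => [euh|eup|[chp cuh _]].
  + by rewrite e_sym; apply: consistentL hu up ehp (esym (off_edge_class uP hP euh)).
  + by rewrite e_sym.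
  + by have [] := monochromatic_straddle_on_path uP u_class ehp hup chp cuh; rewrite (negbTE hP).
Qed.

Lemma off_edge_no_inner x y w : x \notin P -> y \notin P -> w \notin P -> e x y ->
  ~~ (f x < f w < f y).
Proof.
move=> xP yP wP exy; apply/negP => xwy.
have cxy := off_edge_class xP yP exy.
have cwx := inner_class_neq acyclic_triangle_free exy cxy xwy.
have w_class : forall z, e w z -> c z = c w.
  case: (straddle_cases acyclic_triangle_free exy xwy) => [ewx|ewy|[_ _ //]].
  - by rewrite (off_edge_class wP xP ewx) eqxx in cwx.
  - by rewrite (off_edge_class wP yP ewy) cxy eqxx in cwx.
by have [] := monochromatic_straddle_on_path wP w_class exy xwy cxy cwx; rewrite (negbTE xP).
Qed.

Definition idx x := index (anchor x) P.

Definition key x := idx x * (\max_y f y).+1 + f x.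

Lemma idx_anchor x y : idx x = idx y -> anchor x = anchor y.
Proof.
by move=> xy; rewrite -(nth_index v (anchor_mem x)) -(nth_index v (anchor_mem y)) -/(idx x) xy.
Qed.

Lemma f_lt_max x : f x < (\max_y f y).+1.
Proof. by rewrite ltnS leq_bigmax. Qed.

Lemma key_lt x y : key x < key y -> idx x < idx y \/ idx x = idx y /\ f x < f y.
Proof. exact: radix_lt (f_lt_max x) (f_lt_max y). Qed.

Lemma key_inj : injective key.
Proof. by move=> x y /(radix_eq (f_lt_max x) (f_lt_max y))/f_inj. Qed.

Lemma same_anchor_consistent r s t : anchor r = anchor s -> anchor s = anchor t ->
  f r < f s -> f s < f t -> e r t ->
  ((r \in P) == (s \in P) -> e s t) /\ ((s \in P) == (t \in P) -> e r s).
Proof.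
move=> rs_anchor st_anchor rs st ert.
have anchor_inj x y : x \in P -> y \in P -> anchor x = anchor y -> x = y.
  by move=> xP yP; rewrite (anchor_id xP) (anchor_id yP).
case: (boolP (s \in P)) => sP.
  have rP : r \notin P by apply: contraTN rs => rP; rewrite (anchor_inj _ _ rP sP rs_anchor) ltnn.
  have tP : t \notin P by apply: contraTN st => tP; rewrite (anchor_inj _ _ sP tP st_anchor) ltnn.
  by rewrite (negbTE rP) (negbTE tP).
case: (boolP (r \in P)) => rP; case: (boolP (t \in P)) => tP.
- by [].
- split=> // _; apply: (anchor_inner_adj rP tP ert sP); first by rewrite -rs_anchor anchor_id.
  by rewrite rs st.
- split=> // _; rewrite e_sym; apply: (anchor_inner_adj tP rP _ sP); first by rewrite e_sym.
    by rewrite st_anchor anchor_id.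
  by rewrite rs st orbT.
- by have /negP := off_edge_no_inner rP tP sP ert; rewrite rs st.
Qed.

Lemma path_edge_no_inner r s t : r \in P -> t \in P -> e r t ->
  key r < key s -> key s < key t -> s \notin P.
Proof.
move=> rP tP ert rs st; apply/negP => sP.
have key_index x y : x \in P -> y \in P -> key x < key y -> index x P < index y P.
  move=> xP yP /key_lt; rewrite /idx (anchor_id xP) (anchor_id yP) => -[//|[]].
  by move/(congr1 (nth v P)); rewrite !nth_index // => ->; rewrite ltnn.
have := sorted_edge_index P_sorted P_uniq rP tP ert (key_index _ _ rP tP (ltn_trans rs st)).
by have := key_index _ _ rP sP rs; have := key_index _ _ sP tP st; lia.
Qed.

Lemma key_consistent : strongly_consistent e key (fun x => x \in P).
Proof.
move=> r s t rs st ert.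
have [rt_anchor|rt_anchor] := eqVneq (anchor r) (anchor t); last first.
  have [rP tP] := edge_anchor_neq ert rt_anchor.
  by rewrite rP tP (negbTE (path_edge_no_inner rP tP ert rs st)).
have idx_le x y : key x < key y -> idx x <= idx y by case/key_lt => [/ltnW|[->]].
have [rs_idx st_idx] : idx r = idx s /\ idx s = idx t.
  by have := idx_le _ _ rs; have := idx_le _ _ st; rewrite /idx rt_anchor; lia.
have f_lt x y : idx x = idx y -> key x < key y -> f x < f y.
  by move=> xy /key_lt; rewrite xy ltnn => -[|[]].
apply: same_anchor_consistent (idx_anchor rs_idx) (idx_anchor st_idx) _ _ ert.
  exact: f_lt rs_idx rs.
exact: f_lt st_idx st.
Qed.

End Path.
End Tree.
End Ordered.
End Graph.

Theorem corollary2 (T : finType) (e : rel T) :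
  is_tree e -> pthin_eq e 2 ->
  exists (v1 : T) (p : seq T),
    uniq (v1 :: p) /\ path e v1 p /\
    exists f : T -> nat,
      injective f /\ strongly_consistent e f (fun x : T => x \in v1 :: p).
Proof.
move=> [[e_sym e_irr] e_conn e_acyc] [[f [c [f_inj sc]]] pthin_min].
have /card_gt0P[x0 _] : 0 < #|T| by have := pthin_min _ (pthin_le_card e); case: #|T|.
have [v1 _ v1_min] := @arg_minnP T x0 xpredT f erefl.
have [vn _ vn_max] := @arg_maxnP T x0 xpredT f erefl.
have /connectP[s s_path vn_def] := e_conn v1 vn.
case: (shortenP s_path) vn_def => p p_path p_uniq _ vn_def.
exists v1, p; do 2!split => //.
exists (key e f v1 p); split; first exact: key_inj.
apply: key_consistent => //; [exact: sc | move=> x; exact: v1_min | move=> x].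
by rewrite -vn_def; apply: vn_max.
Qed.
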